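(* Let $S$ be a finite-dimensional system with Hamiltonian $H_S$ and state $\rho$. Then $$F_{H_S}(\rho)=\min_{\Phi_\rho,H_A}F_{H_{\rm tot}}(\Phi_\rho)=4\min_{\Phi_\rho,H_A}V_{H_{\rm tot}}(\Phi_\rho),$$ where the minimum is over all auxiliary systems $A$ with Hamiltonian $H_A$ and all pure states $|\Phi_\rho\rangle_{SA}$ with $\mathrm{Tr}_A|\Phi_\rho\rangle\langle\Phi_\rho|=\rho$, and $H_{\rm tot}=H_S\otimes I_A+I_S\otimes H_A$; in particular the minimum is attained.
   Context: Quantum Fisher information (QFI): for a state $\rho=\sum_j p_j|\psi_j\rangle\langle\psi_j|$ (spectral decomposition) and Hermitian $H$, $F_H(\rho)=2\sum_{j,k:\,p_j+p_k>0}\frac{(p_j-p_k)^2}{p_j+p_k}|\langle\psi_j|H|\psi_k\rangle|^2$. For a pure state $F_H(\psi)=4V_H(\psi)$ where $V_H(\psi)=\langle\psi|H^2|\psi\rangle-\langle\psi|H|\psi\rangle^2$. *)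

From HB Require Import structures.
From mathcomp Require Import all_boot all_order all_algebra.
Set Implicit Arguments. Unset Strict Implicit. Unset Printing Implicit Defensive.
Import Order.TTheory GRing.Theory Num.Theory.
Local Open Scope ring_scope.
Local Open Scope sesquilinear_scope.

Section QI.
Variable C : numClosedFieldType.

Definition dag {m n} (M : 'M[C]_(m, n)) : 'M[C]_(n, m) := M ^t*.

Definition hermitian_op {n} (M : 'M[C]_n) : Prop := M \is hermsymmx.

Definition density {n} (rho : 'M[C]_n) : Prop :=
  [/\ rho \is hermsymmx,
      (forall v : 'cV[C]_n, 0 <= (dag v *m rho *m v) 0 0)
    & \tr rho = 1].

(* Quantum Fisher information, computed from the spectral decomposition
   rho = P^dagger diag(p) P supplied by the library (spectralmx /
   spectral_diag); the eigenvectors are |psi_j> = (row j of P)^dagger, so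
   <psi_j|H|psi_k> = (P H P^dagger)_{jk}. *)
Definition qfi {n} (H rho : 'M[C]_n) : C :=
  let P := spectralmx rho in
  let p := spectral_diag rho in
  let Hp := P *m H *m dag P in
  2 * \sum_(j < n) \sum_(k < n | 0 < p 0 j + p 0 k)
        (p 0 j - p 0 k) ^+ 2 / (p 0 j + p 0 k) * `|Hp j k| ^+ 2.

Definition ket_normalized {N} (phi : 'cV[C]_N) : Prop := (dag phi *m phi) 0 0 = 1.

Definition proj {N} (phi : 'cV[C]_N) : 'M[C]_N := phi *m dag phi.

Definition expect {N} (H : 'M[C]_N) (phi : 'cV[C]_N) : C := (dag phi *m H *m phi) 0 0.

Definition variance {N} (H : 'M[C]_N) (phi : 'cV[C]_N) : C :=
  expect (H *m H) phi - expect H phi ^+ 2.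

(* Tensor product C^n (x) C^m = C^(n*m), with basis index
   mxvec_index i a <-> |i>_S |a>_A. *)
Definition idx_pair {n m} (k : 'I_(n * m)) : 'I_n * 'I_m :=
  enum_val (cast_ord (esym (mxvec_cast n m)) k).

Definition kron {n m} (A : 'M[C]_n) (B : 'M[C]_m) : 'M[C]_(n * m) :=
  \matrix_(k, l) (A (idx_pair k).1 (idx_pair l).1 * B (idx_pair k).2 (idx_pair l).2).

Definition Htot {n m} (HS : 'M[C]_n) (HA : 'M[C]_m) : 'M[C]_(n * m) :=
  kron HS 1%:M + kron 1%:M HA.

Definition ptraceA {n m} (M : 'M[C]_(n * m)) : 'M[C]_n :=
  \matrix_(i, j) \sum_(a < m) M (mxvec_index i a) (mxvec_index j a).

Definition purification {n m} (rho : 'M[C]_n) (phi : 'cV[C]_(n * m)) : Prop :=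
  ket_normalized phi /\ ptraceA (proj phi) = rho.

End QI.

(* Identify a ket Phi of S (x) A with its coefficient matrix M, so that
   Tr_A |Phi><Phi| = M M^dagger, H_tot Phi corresponds to R = H_S M + M H_A^T,
   and V_{H_tot}(Phi) = tr (R R^dagger) - tr (R M^dagger)^2.  After rotating to
   the eigenbasis of rho (M M^dagger = diag p), Bessel's inequality for the
   projection of R onto the rows of M, a two-term Cauchy-Schwarz inequality for
   every pair (j, k) and a weighted Cauchy-Schwarz inequality for the trace term
   give 4 V >= F_{H_S}(rho); for a pure state F = 4 V.  Equality is reached by
   the purification M = diag (sqrt p) in the eigenbasis with an explicit ancilla
   Hamiltonian. *)

From HB Require Import structures.
From mathcomp Require Import all_boot all_order all_algebra.
From mathcomp Require Import ring.
Set Implicit Arguments. Unset Strict Implicit. Unset Printing Implicit Defensive.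
Import Order.TTheory GRing.Theory Num.Theory.
Local Open Scope ring_scope.
Local Open Scope sesquilinear_scope.

Section Purification.
Variable C : numClosedFieldType.

Lemma trmxC_mul m n p (A : 'M[C]_(m, n)) (B : 'M[C]_(n, p)) :
  (A *m B)^t* = B^t* *m A^t*.
Proof. by rewrite trmx_mul map_mxM. Qed.

Lemma trmxCD m n (A B : 'M[C]_(m, n)) : (A + B)^t* = A^t* + B^t*.
Proof. by rewrite linearD /= map_mxD. Qed.

Lemma trmxCN m n (A : 'M[C]_(m, n)) : (- A)^t* = - A^t*.
Proof. by rewrite linearN /= map_mxN. Qed.

Lemma hermsymmxP n (H : 'M[C]_n) : reflect (H^t* = H) (H \is hermsymmx).
Proof. by rewrite is_hermitianmxE expr0 scale1r eq_sym; apply: eqP. Qed.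

Lemma selfadjoint_conj n (H : 'M[C]_n) i j : H^t* = H -> (H i j)^* = H j i.
Proof. by move=> hH; rewrite -[in RHS]hH !mxE. Qed.

(** * Bipartite kets as matrices *)

Lemma idx_pairK n m (i : 'I_n) (a : 'I_m) : idx_pair (mxvec_index i a) = (i, a).
Proof. by rewrite /idx_pair /mxvec_index cast_ordK enum_rankK. Qed.

Lemma sum_mxvec_index n m (F : 'I_(n * m) -> C) :
  \sum_k F k = \sum_i \sum_a F (mxvec_index i a).
Proof.
rewrite (reindex _ (curry_mxvec_bij n m)) pair_big /=.
by apply: eq_bigr => -[i a].
Qed.

Lemma kronE n m (A : 'M[C]_n) (B : 'M[C]_m) i a j b :
  kron A B (mxvec_index i a) (mxvec_index j b) = A i j * B a b.
Proof. by rewrite mxE !idx_pairK. Qed.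

Lemma trmxC_kron n m (A : 'M[C]_n) (B : 'M[C]_m) : (kron A B)^t* = kron (A^t*) (B^t*).
Proof.
apply/matrixP => k l; case/mxvec_indexP: k => i a; case/mxvec_indexP: l => j b.
by rewrite !mxE !idx_pairK /= rmorphM.
Qed.

Lemma Htot_selfadjoint n m (HS : 'M[C]_n) (HA : 'M[C]_m) :
  HS^t* = HS -> HA^t* = HA -> (Htot HS HA)^t* = Htot HS HA.
Proof.
move=> hS hA; rewrite /Htot trmxCD !trmxC_kron hS hA.
by rewrite !tr_scalar_mx !map_scalar_mx /= conjC1.
Qed.

Definition ket_mx n m (Phi : 'cV[C]_(n * m)) : 'M[C]_(n, m) := vec_mx Phi^T.

Lemma ket_mxE n m (Phi : 'cV[C]_(n * m)) i a :
  ket_mx Phi i a = Phi (mxvec_index i a) 0.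
Proof. by rewrite !mxE. Qed.

Lemma ket_mxK n m (M : 'M[C]_(n, m)) : ket_mx (mxvec M)^T = M.
Proof. by rewrite /ket_mx trmxK mxvecK. Qed.

Lemma ket_mx_kron n m (A : 'M[C]_n) (B : 'M[C]_m) (Phi : 'cV[C]_(n * m)) :
  ket_mx (kron A B *m Phi) = A *m ket_mx Phi *m B^T.
Proof.
apply/matrixP => i a; rewrite ket_mxE !mxE sum_mxvec_index.
under eq_bigr do under eq_bigr do rewrite kronE -ket_mxE.
rewrite exchange_big; apply: eq_bigr => b _ /=; rewrite !mxE mulr_suml.
by apply: eq_bigr => j _; rewrite !mxE; ring.
Qed.

Lemma ket_mx_Htot n m (HS : 'M[C]_n) (HA : 'M[C]_m) (Phi : 'cV[C]_(n * m)) :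
  ket_mx (Htot HS HA *m Phi) = HS *m ket_mx Phi + ket_mx Phi *m HA^T.
Proof.
rewrite /Htot mulmxDl /ket_mx linearD /= linearD /= -!/(ket_mx _) !ket_mx_kron.
by rewrite trmx1 !mulmx1 mul1mx.
Qed.

Lemma dot_ket_mx n m (U V : 'cV[C]_(n * m)) :
  (U^t* *m V) 0 0 = \tr (ket_mx V *m (ket_mx U)^t*).
Proof.
rewrite mxE sum_mxvec_index; apply: eq_bigr => i _; rewrite mxE.
by apply: eq_bigr => a _; rewrite !mxE mulrC.
Qed.

Lemma ptraceA_proj n m (Phi : 'cV[C]_(n * m)) :
  ptraceA (proj Phi) = ket_mx Phi *m (ket_mx Phi)^t*.
Proof.
apply/matrixP => i j; rewrite !mxE; apply: eq_bigr => a _.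
by rewrite !mxE big_ord1 !mxE.
Qed.

Lemma selfadjoint_normalmx n (A : 'M[C]_n) : A^t* = A -> A \is normalmx.
Proof. by move=> /hermsymmxP; apply: hermitian_normalmx. Qed.

Lemma mxtrace_diag_mul n (d : 'rV[C]_n) (M : 'M[C]_n) :
  \tr (diag_mx d *m M) = \sum_j d 0 j * M j j.
Proof. by rewrite mul_diag_mx; apply: eq_bigr => j _; rewrite mxE. Qed.

Lemma unitarymx_trmxC_mul n (P : 'M[C]_n) : P \is unitarymx -> P^t* *m P = 1%:M.
Proof. by rewrite -trmxC_unitary => /unitarymxP; rewrite trmxCK. Qed.

Section Spectral.
Variables (n : nat) (A : 'M[C]_n).
Hypothesis normalA : A \is normalmx.

Lemma spectral_decomp :
  A = (spectralmx A)^t* *m diag_mx (spectral_diag A) *m spectralmx A.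
Proof.
by rewrite {1}(orthomx_spectralP normalA) invmx_unitary ?spectral_unitarymx.
Qed.

Lemma spectral_diagonalize :
  spectralmx A *m A *m (spectralmx A)^t* = diag_mx (spectral_diag A).
Proof.
have U := spectral_unitarymx A.
rewrite {2}spectral_decomp !mulmxA (unitarymxP U) mul1mx mulmxtVK //.
Qed.

Lemma mxtrace_spectral M : \tr (A *m M) =
  \sum_j spectral_diag A 0 j * (spectralmx A *m M *m (spectralmx A)^t*) j j.
Proof.
rewrite {1}spectral_decomp -!mulmxA mxtrace_mulC -!mulmxA -mxtrace_diag_mul.
by rewrite !mulmxA.
Qed.

End Spectral.

Lemma density_normalmx n (rho : 'M[C]_n) : density rho -> rho \is normalmx.
Proof. by case=> /hermsymmxP/selfadjoint_normalmx. Qed.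

Lemma row_mul_trmxC_row m n (X Y : 'M[C]_(m, n)) j k :
  (row j X *m (row k Y)^t*) 0 0 = (X *m Y^t*) j k.
Proof. by rewrite !mxE; apply: eq_bigr => a _; rewrite !mxE. Qed.

Lemma density_spectral_ge0 n (rho : 'M[C]_n) j :
  density rho -> 0 <= spectral_diag rho 0 j.
Proof.
move=> rho_density; have [_ psd _] := rho_density.
have := psd ((row j (spectralmx rho))^t*).
rewrite /dag trmxCK -row_mul row_mul_trmxC_row spectral_diagonalize ?density_normalmx //.
by rewrite mxE eqxx mulr1n.
Qed.

Lemma density_spectral_sum n (rho : 'M[C]_n) :
  density rho -> \sum_j spectral_diag rho 0 j = 1.
Proof.
move=> rho_density; have [_ _ <-] := rho_density.
rewrite -mxtrace_diag -spectral_diagonalize ?density_normalmx // mxtrace_mulC mulmxA.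
by rewrite unitarymx_trmxC_mul ?spectral_unitarymx // mul1mx.
Qed.

(** * Quantum Fisher information in the eigenbasis *)

Definition qfi_term n (p : 'rV[C]_n) (K : 'M[C]_n) j k : C :=
  (p 0 j - p 0 k) ^+ 2 / (p 0 j + p 0 k) * `|K j k| ^+ 2.

Definition qfi_sum n (p : 'rV[C]_n) (K : 'M[C]_n) : C :=
  2 * \sum_j \sum_(k | 0 < p 0 j + p 0 k) qfi_term p K j k.

Lemma qfiE n (H rho : 'M[C]_n) :
  qfi H rho = qfi_sum (spectral_diag rho) (spectralmx rho *m H *m (spectralmx rho)^t*).
Proof. by []. Qed.

(* The guard [0 < p j + p k] is redundant for nonnegative weights, since
   [x / 0 = 0]. *)
Lemma qfi_sumE n (p : 'rV[C]_n) (K : 'M[C]_n) : (forall j, 0 <= p 0 j) ->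
  qfi_sum p K = 2 * \sum_j \sum_k qfi_term p K j k.
Proof.
move=> p_ge0; congr (2 * _); apply: eq_bigr => j _; rewrite big_mkcond /=.
apply: eq_bigr => k _; rewrite /qfi_term; case: ifPn => // /negbTE.
have := addr_ge0 (p_ge0 j) (p_ge0 k); rewrite le_eqVlt => /orP[/eqP <- _|-> //].
by rewrite invr0 mulr0 mul0r.
Qed.

Lemma rank_one_weights n (w : 'cV[C]_n) (q : 'rV[C]_n) :
  w *m w^t* = diag_mx q -> (w^t* *m w) 0 0 = 1 ->
  [/\ forall j, 0 <= q 0 j, forall j k, j != k -> q 0 j * q 0 k = 0
    & \sum_j q 0 j = 1].
Proof.
move=> wwE w1.
have wwjk j k : w j 0 * (w k 0)^* = q 0 j *+ (j == k).
  by have := congr1 (fun X : 'M[C]_n => X j k) wwE; rewrite !mxE big_ord1 !mxE.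
have qE j : q 0 j = w j 0 * (w j 0)^* by rewrite wwjk eqxx.
split=> [j|j k jk|]; first by rewrite qE mul_conjC_ge0.
  have -> : q 0 j * q 0 k = (w j 0 * (w k 0)^*) * (w k 0 * (w j 0)^*).
    by rewrite !qE; ring.
  by rewrite wwjk (negbTE jk) mul0r.
by rewrite -w1 mxE; apply: eq_bigr => j _; rewrite qE !mxE mulrC.
Qed.

Lemma sqrrB_div_addr (x y : C) : x * y = 0 -> (x - y) ^+ 2 / (x + y) = x + y.
Proof.
have -> : (x - y) ^+ 2 = (x + y) ^+ 2 - 4 * (x * y) by ring.
move=> ->; rewrite mulr0 subr0.
have [->|s_neq0] := eqVneq (x + y) 0; first by rewrite expr2 !mul0r.
by rewrite expr2 mulfK.
Qed.

Lemma qfi_sum_pure n (q : 'rV[C]_n) (K : 'M[C]_n) :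
  (forall j, 0 <= q 0 j) -> (forall j k, j != k -> q 0 j * q 0 k = 0) ->
  \sum_j q 0 j = 1 -> K^t* = K ->
  qfi_sum q K =
  4 * (\sum_j q 0 j * \sum_k `|K j k| ^+ 2 - (\sum_j q 0 j * K j j) ^+ 2).
Proof.
move=> q_ge0 q_orth q1 selfK.
have q_idem j : q 0 j * q 0 j = q 0 j.
  rewrite -[RHS]mulr1 -q1 mulr_sumr (bigD1 j) //= big1 ?addr0 // => k kj.
  by rewrite q_orth // eq_sym.
have normK j k : `|K k j| = `|K j k| by rewrite -norm_conjC selfadjoint_conj.
have sqr_mean : (\sum_j q 0 j * K j j) ^+ 2 = \sum_j q 0 j * `|K j j| ^+ 2.
  rewrite expr2 mulr_suml; apply: eq_bigr => j _; rewrite mulr_sumr.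
  rewrite (bigD1 j) //= big1 ?addr0 => [|k kj]; last first.
    by rewrite mulrACA q_orth ?mul0r // eq_sym.
  by rewrite mulrACA q_idem normCK selfadjoint_conj.
have inner j : \sum_k qfi_term q K j k =
    \sum_k (q 0 j + q 0 k) * `|K j k| ^+ 2 - 2 * (q 0 j * `|K j j| ^+ 2).
  rewrite /qfi_term (bigD1 j) //= [X in _ = X - _](bigD1 j) //=.
  rewrite [X in _ + X = _](eq_bigr (fun k => (q 0 j + q 0 k) * `|K j k| ^+ 2)).
    by ring.
  by move=> k kj; rewrite sqrrB_div_addr // q_orth // eq_sym.
have outer : \sum_j \sum_k (q 0 j + q 0 k) * `|K j k| ^+ 2 =
    2 * \sum_j q 0 j * \sum_k `|K j k| ^+ 2.
  under eq_bigr do rewrite (eq_bigr _ (fun k _ => mulrDl _ _ _)) big_split /= -mulr_sumr.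
  rewrite big_split /= [X in _ + X]exchange_big /= mulr2n mulrDl mul1r; congr (_ + _).
  by apply: eq_bigr => k _; rewrite mulr_sumr; apply: eq_bigr => j _; rewrite normK.
rewrite qfi_sumE // (eq_bigr _ (fun j _ => inner j)) sumrB outer -mulr_sumr -sqr_mean.
ring.
Qed.

Lemma expect_trace N (M : 'M[C]_N) (phi : 'cV[C]_N) :
  expect M phi = \tr (proj phi *m M).
Proof. by rewrite /expect /proj -trace_mx11 mxtrace_mulC !mulmxA. Qed.

Lemma proj_selfadjoint N (phi : 'cV[C]_N) : (proj phi)^t* = proj phi.
Proof. by rewrite /proj /dag trmxC_mul trmxCK. Qed.

Lemma qfi_pure N (H : 'M[C]_N) (phi : 'cV[C]_N) :
  H^t* = H -> ket_normalized phi -> qfi H (proj phi) = 4 * variance H phi.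
Proof.
move=> selfH phi1.
have normal_proj := selfadjoint_normalmx (proj_selfadjoint phi).
set Q := spectralmx (proj phi); have UQ : Q \is unitarymx := spectral_unitarymx _.
have wwE : (Q *m phi) *m (Q *m phi)^t* = diag_mx (spectral_diag (proj phi)).
  by rewrite trmxC_mul !mulmxA -spectral_diagonalize // /proj /dag !mulmxA.
have w1 : ((Q *m phi)^t* *m (Q *m phi)) 0 0 = 1.
  by rewrite trmxC_mul mulmxA -(mulmxA _ _ Q) unitarymx_trmxC_mul // mulmx1.
have [q_ge0 q_orth q1] := rank_one_weights wwE w1.
set K := Q *m H *m Q^t*.
have selfK : K^t* = K by rewrite !trmxC_mul trmxCK selfH mulmxA.
rewrite qfiE -/Q -/K qfi_sum_pure // /variance !expect_trace !mxtrace_spectral //.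
have -> : Q *m (H *m H) *m Q^t* = K *m K by rewrite /K !mulmxA mulmxKtV.
congr (4 * (_ - _)); apply: eq_bigr => j _; congr (_ * _); rewrite mxE.
by apply: eq_bigr => k _; rewrite normCK selfadjoint_conj.
Qed.

(** * The variance of H_tot as a matrix expression *)

Definition ket_variance n m (H : 'M[C]_n) (G : 'M[C]_m) (M : 'M[C]_(n, m)) : C :=
  \tr ((H *m M + M *m G) *m (H *m M + M *m G)^t*)
  - \tr ((H *m M + M *m G) *m M^t*) ^+ 2.

Lemma variance_Htot n m (HS : 'M[C]_n) (HA : 'M[C]_m) (Phi : 'cV[C]_(n * m)) :
  HS^t* = HS -> HA^t* = HA ->
  variance (Htot HS HA) Phi = ket_variance HS HA^T (ket_mx Phi).
Proof.
move=> selfHS selfHA; have selfH := Htot_selfadjoint selfHS selfHA.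
rewrite /variance /expect /ket_variance -ket_mx_Htot -!dot_ket_mx /dag.
by rewrite trmxC_mul selfH !mulmxA.
Qed.

Lemma mxtrace_unitary_conj n m (P : 'M[C]_n) (X Y : 'M[C]_(n, m)) :
  P \is unitarymx -> \tr ((P *m X) *m (P *m Y)^t*) = \tr (X *m Y^t*).
Proof.
move=> UP; rewrite trmxC_mul !mulmxA mxtrace_mulC !mulmxA.
by rewrite unitarymx_trmxC_mul // mul1mx.
Qed.

Lemma ket_variance_unitary n m (P H : 'M[C]_n) (G : 'M[C]_m) (M : 'M[C]_(n, m)) :
  P \is unitarymx ->
  ket_variance (P *m H *m P^t*) G (P *m M) = ket_variance H G M.
Proof.
move=> UP; rewrite /ket_variance.
have -> : P *m H *m P^t* *m (P *m M) + P *m M *m G = P *m (H *m M + M *m G).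
  by rewrite mulmxDr !mulmxA mulmxKtV.
by rewrite !mxtrace_unitary_conj.
Qed.

(** * The lower bound *)

Lemma mxtrace_mul_trmxC m n (X Y : 'M[C]_(m, n)) :
  \tr (X *m Y^t*) = \sum_i \sum_a X i a * (Y i a)^*.
Proof. by apply: eq_bigr => i _; rewrite mxE; apply: eq_bigr => a _; rewrite !mxE. Qed.

Lemma mxtrace_mul_trmxC_ge0 m n (X : 'M[C]_(m, n)) : 0 <= \tr (X *m X^t*).
Proof.
rewrite mxtrace_mul_trmxC; apply: sumr_ge0 => i _.
by apply: sumr_ge0 => a _; rewrite mul_conjC_ge0.
Qed.

Section DiagonalGram.
Variables (n m : nat) (N : 'M[C]_(n, m)) (p : 'rV[C]_n).
Hypothesis NNE : N *m N^t* = diag_mx p.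

Lemma diag_gramE j : p 0 j = \sum_a `|N j a| ^+ 2.
Proof.
have := congr1 (fun X : 'M[C]_n => X j j) NNE; rewrite !mxE eqxx mulr1n => <-.
by apply: eq_bigr => a _; rewrite !mxE normCK.
Qed.

Lemma diag_gram_ge0 j : 0 <= p 0 j.
Proof. by rewrite diag_gramE sumr_ge0 // => a _; rewrite exprn_ge0. Qed.

Lemma diag_gram_row0 j : p 0 j = 0 -> row j N = 0.
Proof.
rewrite diag_gramE => /psumr_eq0P sum0; apply/rowP => a; rewrite !mxE.
by apply/eqP; rewrite -normr_eq0 -sqrf_eq0 sum0 // => b _; rewrite exprn_ge0.
Qed.

Lemma bessel_diag_gram (R : 'M[C]_(n, m)) :
  \sum_j \sum_k `|(R *m N^t*) j k| ^+ 2 / p 0 k <= \tr (R *m R^t*).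
Proof.
set A := R *m N^t*; pose Cf := \matrix_(j, k) (A j k / p 0 k).
have CfNE : Cf *m N *m N^t* = A.
  apply/matrixP => j k; rewrite -mulmxA NNE mul_mx_diag mxE [Cf j k]mxE.
  have [pk0|pk_neq0] := eqVneq (p 0 k) 0; last by rewrite divfK.
  by rewrite pk0 mulr0 /A -row_mul_trmxC_row (diag_gram_row0 pk0) trmx0 map_mx0 mulmx0 mxE.
have ortho : (R - Cf *m N) *m (R - Cf *m N)^t* = R *m R^t* - Cf *m A^t*.
  rewrite trmxCD trmxCN !trmxC_mul mulmxDl !mulmxDr !mulNmx !mulmxN opprK !mulmxA CfNE.
  by rewrite trmxCK -/A addrCA subrK addrC.
have -> : \sum_j \sum_k `|A j k| ^+ 2 / p 0 k = \tr (Cf *m A^t*).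
  rewrite mxtrace_mul_trmxC; apply: eq_bigr => j _; apply: eq_bigr => k _.
  by rewrite [Cf j k]mxE [RHS]mulrAC normCK.
by rewrite -subr_ge0 -raddfB -ortho mxtrace_mul_trmxC_ge0.
Qed.

End DiagonalGram.

Lemma normB_sqr_div_le (x y a b : C) : 0 < a -> 0 < b ->
  `|x - y| ^+ 2 / (a + b) <= `|x| ^+ 2 / a + `|y| ^+ 2 / b.
Proof.
move=> a_gt0 b_gt0; rewrite -subr_ge0.
have [a_neq0 b_neq0] := (lt0r_neq0 a_gt0, lt0r_neq0 b_gt0).
have ab_neq0 := lt0r_neq0 (addr_gt0 a_gt0 b_gt0).
have -> : `|x| ^+ 2 / a + `|y| ^+ 2 / b - `|x - y| ^+ 2 / (a + b) =
    `|b * x + a * y| ^+ 2 / (a * b * (a + b)).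
  rewrite !normCK !rmorphD !rmorphN !rmorphM /=.
  rewrite (geC0_conj (ltW a_gt0)) (geC0_conj (ltW b_gt0)).
  by field; rewrite a_neq0 b_neq0 ab_neq0.
by rewrite divr_ge0 ?exprn_ge0 // !mulr_ge0 ?ltW ?addr_gt0.
Qed.

Lemma sqr_sum_le_weighted n (p a : 'I_n -> C) :
  (forall j, 0 <= p j) -> \sum_j p j = 1 ->
  (forall j, a j \is Num.real) -> (forall j, p j = 0 -> a j = 0) ->
  (\sum_j a j) ^+ 2 <= \sum_j a j ^+ 2 / p j.
Proof.
move=> p_ge0 p1 a_real a0; set s := \sum_j a j.
have s_real : s \is Num.real by apply: rpred_sum.
have term j : p j * (a j / p j - s) ^+ 2 = a j ^+ 2 / p j - 2 * s * a j + s ^+ 2 * p j.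
  have [pj0|pj_neq0] := eqVneq (p j) 0; first by rewrite pj0 a0 // !(mul0r, mulr0); ring.
  by field.
rewrite -subr_ge0.
have -> : \sum_j a j ^+ 2 / p j - s ^+ 2 = \sum_j p j * (a j / p j - s) ^+ 2.
  rewrite (eq_bigr _ (fun j _ => term j)) big_split sumrB /= -!mulr_sumr -/s p1.
  ring.
apply: sumr_ge0 => j _; rewrite mulr_ge0 // -real_normK ?exprn_ge0 //.
by rewrite rpredB // rpredM ?rpredV // ger0_real.
Qed.

Lemma pair_weight_le (pj pk K g : C) : 0 <= pj -> 0 <= pk ->
  (pj = 0 -> g = 0) -> (pk = 0 -> g = 0) ->
  (pj - pk) ^+ 2 / (pj + pk) * `|K| ^+ 2 <=
  `|K * pk + g| ^+ 2 / pk + `|K * pj + g| ^+ 2 / pj.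
Proof.
move=> pj_ge0 pk_ge0 gj gk.
have [pj0|pj_neq0] := eqVneq pj 0.
  rewrite pj0 gj // sub0r add0r sqrrN invr0 !mulr0 !addr0 normrM (ger0_norm pk_ge0).
  by rewrite exprMn mulrC mulrA.
have [pk0|pk_neq0] := eqVneq pk 0.
  rewrite pk0 gk // subr0 !addr0 invr0 !mulr0 add0r normrM (ger0_norm pj_ge0).
  by rewrite exprMn mulrC mulrA.
have pj_gt0 : 0 < pj by rewrite lt_def pj_neq0.
have pk_gt0 : 0 < pk by rewrite lt_def pk_neq0.
have -> : (pj - pk) ^+ 2 / (pj + pk) * `|K| ^+ 2 =
    `|(K * pk + g) - (K * pj + g)| ^+ 2 / (pk + pj).
  have -> : K * pk + g - (K * pj + g) = K * (pk - pj) by ring.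
  rewrite normrM exprMn (@real_normK _ (pk - pj)) ?rpredB ?ger0_real //.
  by rewrite [pk + pj]addrC; ring.
exact: normB_sqr_div_le.
Qed.

Lemma sum_diag_le n (F : 'I_n -> 'I_n -> C) : (forall j k, 0 <= F j k) ->
  \sum_j F j j <= \sum_j \sum_k F j k.
Proof.
move=> F_ge0; apply: ler_sum => j _; rewrite (bigD1 j) //= lerDl.
exact: sumr_ge0.
Qed.

Section LowerBound.
Variables (n m : nat) (p : 'rV[C]_n) (K : 'M[C]_n) (G : 'M[C]_m) (N : 'M[C]_(n, m)).
Hypotheses (NNE : N *m N^t* = diag_mx p) (selfK : K^t* = K) (selfG : G^t* = G).

Let p_ge0 := diag_gram_ge0 NNE.
Let g := N *m G *m N^t*.
Let R := K *m N + N *m G.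
Let A := R *m N^t*.
Let T j k := `|A j k| ^+ 2 / p 0 k.

Let g_conj j k : (g j k)^* = g k j.
Proof. by apply: selfadjoint_conj; rewrite !trmxC_mul trmxCK selfG mulmxA. Qed.

Let g_eq0 j k : p 0 j = 0 -> g j k = 0.
Proof.
move=> /(diag_gram_row0 NNE) rowN0.
have /rowP/(_ k) : row j g = 0 by rewrite !row_mul rowN0 !mul0mx.
by rewrite !mxE.
Qed.

Let g_eq0' j k : p 0 k = 0 -> g j k = 0.
Proof. by move=> pk0; rewrite -g_conj g_eq0 ?rmorph0. Qed.

Let AE j k : A j k = K j k * p 0 k + g j k.
Proof. by rewrite /A mulmxDl -(mulmxA K) NNE mxE mul_mx_diag mxE. Qed.

Lemma qfi_term_le_overlap j k : qfi_term p K j k <= T j k + T k j.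
Proof.
rewrite /T; have -> : A k j = (K j k * p 0 j + g j k)^*.
  by rewrite AE rmorphD rmorphM /= selfadjoint_conj // g_conj geC0_conj.
rewrite AE norm_conjC; apply: pair_weight_le => //; [exact: g_eq0 | exact: g_eq0'].
Qed.

Lemma sqr_trace_overlap_le : \sum_j p 0 j = 1 -> \tr A ^+ 2 <= \sum_j T j j.
Proof.
move=> p1; have A_real j : A j j \is Num.real.
  by rewrite AE rpredD ?rpredM ?(ger0_real (p_ge0 j)) //; apply/CrealP;
    [exact: selfadjoint_conj | exact: g_conj].
rewrite [X in _ <= X](eq_bigr (fun j => A j j ^+ 2 / p 0 j)) => [|j _]; last first.
  by rewrite /T real_normK.
apply: sqr_sum_le_weighted => // j pj0.
by rewrite AE pj0 mulr0 add0r g_eq0.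
Qed.

Lemma qfi_sum_le_ket_variance :
  \sum_j p 0 j = 1 -> qfi_sum p K <= 4 * ket_variance K G N.
Proof.
move=> p1; pose w := qfi_term p K.
have bessel : \sum_j \sum_k T j k <= \tr (R *m R^t*) := bessel_diag_gram NNE R.
have offdiag := sum_diag_le (F := fun j k => T j k + T k j - w j k)
  (fun j k => etrans (subr_ge0 _ _) (qfi_term_le_overlap j k)).
have sumTT : \sum_j \sum_k (T j k + T k j - w j k) =
    2 * \sum_j \sum_k T j k - \sum_j \sum_k w j k.
  under eq_bigr do rewrite sumrB big_split /=.
  by rewrite sumrB big_split /= [X in _ + X - _]exchange_big /=; ring.
have sumTd : \sum_j (T j j + T j j - w j j) = 2 * \sum_j T j j.
  rewrite mulr_sumr; apply: eq_bigr => j _.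
  by rewrite /w /qfi_term subrr expr0n /= !mul0r subr0; ring.
have cs := sqr_trace_overlap_le p1.
rewrite qfi_sumE // -subr_ge0 /ket_variance -/R -/A.
rewrite (_ : _ - _ = 2 * (\sum_j \sum_k (T j k + T k j - w j k)
    - \sum_j (T j j + T j j - w j j)) + 4 * (\tr (R *m R^t*) - \sum_j \sum_k T j k)
    + 4 * (\sum_j T j j - \tr A ^+ 2)); last by rewrite sumTT sumTd; ring.
by rewrite !addr_ge0 // mulr_ge0 // subr_ge0.
Qed.

End LowerBound.

(** * Attaining the bound *)

(* With S := diag_mx s and s_j^2 = p_j, this choice makes R := K S + S G satisfy
   R_jk = K_jk s_k (p_k - p_j) / (p_j + p_k): the diagonal of R S vanishes, so
   the variance reduces to the squared Frobenius norm of R, and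
   |R_jk|^2 + |R_kj|^2 is exactly the QFI summand. *)
Definition optimal_HA n (K : 'M[C]_n) (s : 'rV[C]_n) : 'M[C]_n :=
  \matrix_(j, k) (- 2 * K j k * s 0 j * s 0 k / (s 0 j ^+ 2 + s 0 k ^+ 2)).

Section OptimalAncilla.
Variables (n : nat) (K : 'M[C]_n) (s p : 'rV[C]_n).
Hypotheses (selfK : K^t* = K) (s_ge0 : forall j, 0 <= s 0 j)
  (p_sqr : forall j, p 0 j = s 0 j ^+ 2).

Let s_conj j : (s 0 j)^* = s 0 j := geC0_conj (s_ge0 j).

Lemma optimal_HA_selfadjoint : (optimal_HA K s)^t* = optimal_HA K s.
Proof.
apply/matrixP => j k; rewrite !mxE !(rmorphM, rmorphD, rmorphN, fmorphV) /=.
by rewrite selfadjoint_conj // !s_conj conjC1 [_ + s 0 j * _]addrC; ring.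
Qed.

Let r j k := s 0 k * (p 0 k - p 0 j) / (p 0 j + p 0 k).

Lemma optimal_ket_entry j k :
  (K *m diag_mx s + diag_mx s *m optimal_HA K s) j k = K j k * r j k.
Proof.
rewrite mxE mul_mx_diag mul_diag_mx !mxE /r !p_sqr.
have [/eqP|sjk_neq0] := eqVneq (s 0 j ^+ 2 + s 0 k ^+ 2) 0; last by field.
rewrite paddr_eq0 ?exprn_ge0 // !sqrf_eq0 => /andP[_ /eqP ->].
by rewrite !(mulr0, mul0r, addr0).
Qed.

Lemma optimal_r_sqr j k :
  r j k ^+ 2 + r k j ^+ 2 = (p 0 j - p 0 k) ^+ 2 / (p 0 j + p 0 k).
Proof.
rewrite /r !p_sqr.
have [/eqP|sjk_neq0] := eqVneq (s 0 j ^+ 2 + s 0 k ^+ 2) 0.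
  rewrite paddr_eq0 ?exprn_ge0 // !sqrf_eq0 => /andP[/eqP -> /eqP ->].
  by rewrite !(expr2, mul0r, addr0, subr0).
have skj_neq0 : s 0 k ^+ 2 + s 0 j ^+ 2 != 0 by rewrite addrC.
by field.
Qed.

Lemma ket_variance_optimal :
  qfi_sum p K = 4 * ket_variance K (optimal_HA K s) (diag_mx s).
Proof.
set R := K *m diag_mx s + diag_mx s *m optimal_HA K s.
have p_ge0 j : 0 <= p 0 j by rewrite p_sqr exprn_ge0.
have diag_s : (diag_mx s)^t* = diag_mx s.
  apply/matrixP => j k; rewrite !mxE raddfMn /= s_conj eq_sym.
  by have [->|] := eqVneq j k.
have tr0 : \tr (R *m (diag_mx s)^t*) = 0.
  rewrite diag_s mxtrace_mulC mxtrace_diag_mul big1 // => j _.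
  by rewrite optimal_ket_entry /r subrr !(mulr0, mul0r).
have r_real j k : r j k \is Num.real.
  by rewrite /r !(rpredM, rpredV, rpredB, rpredD) //;
    apply: ger0_real; rewrite ?p_ge0 ?s_ge0.
have RR j k : R j k * (R j k)^* = r j k ^+ 2 * `|K j k| ^+ 2.
  by rewrite -normCK optimal_ket_entry normrM exprMn (real_normK (r_real j k)) mulrC.
have normK j k : `|K k j| = `|K j k| by rewrite -norm_conjC selfadjoint_conj.
rewrite /ket_variance -/R tr0 expr2 mul0r subr0 mxtrace_mul_trmxC qfi_sumE // /qfi_term.
under eq_bigr do under eq_bigr do rewrite -optimal_r_sqr mulrDl.
under [in RHS]eq_bigr do under eq_bigr do rewrite RR.
under eq_bigr do rewrite big_split /=.
rewrite big_split /= [X in _ + X]exchange_big /=.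
under [X in _ + X]eq_bigr do under eq_bigr do rewrite normK.
by ring.
Qed.

End OptimalAncilla.

Lemma trmx_selfadjoint n (A : 'M[C]_n) : A^t* = A -> (A^T)^t* = A^T.
Proof. by move=> selfA; apply/matrixP => i j; rewrite !mxE selfadjoint_conj. Qed.

Lemma qfi_le_variance_purification n m (HS rho : 'M[C]_n) (HA : 'M[C]_m)
    (Phi : 'cV[C]_(n * m)) :
  HS^t* = HS -> HA^t* = HA -> density rho -> purification rho Phi ->
  qfi HS rho <= 4 * variance (Htot HS HA) Phi.
Proof.
move=> selfHS selfHA rho_density [_ ptrace].
have UP := spectral_unitarymx rho; set P := spectralmx rho in UP *.
rewrite variance_Htot // qfiE -(ket_variance_unitary _ _ _ UP).
apply: qfi_sum_le_ket_variance; last exact: density_spectral_sum.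
- rewrite trmxC_mul !mulmxA -(mulmxA P) -ptraceA_proj ptrace.
  exact: spectral_diagonalize (density_normalmx rho_density).
- by rewrite !trmxC_mul trmxCK selfHS mulmxA.
- exact: trmx_selfadjoint.
Qed.

Lemma diag_mx_sqr n (s p : 'rV[C]_n) : (forall j, 0 <= s 0 j) ->
  (forall j, p 0 j = s 0 j ^+ 2) -> diag_mx s *m (diag_mx s)^t* = diag_mx p.
Proof.
move=> s_ge0 p_sqr; apply/matrixP => j k; rewrite mul_diag_mx !mxE.
rewrite raddfMn /= geC0_conj // eq_sym p_sqr.
by have [->|_] := eqVneq j k; rewrite ?mulr0n ?mulr1n ?mulr0.
Qed.

Lemma purification_attains_qfi n (HS rho : 'M[C]_n) :
  HS^t* = HS -> density rho ->
  exists m (HA : 'M[C]_m) (Phi : 'cV[C]_(n * m)),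
    [/\ HA^t* = HA, purification rho Phi & qfi HS rho = 4 * variance (Htot HS HA) Phi].
Proof.
move=> selfHS rho_density.
have UP := spectral_unitarymx rho; set P := spectralmx rho in UP *.
set p := spectral_diag rho; set s := \row_j sqrtC (p 0 j).
have s_ge0 j : 0 <= s 0 j by rewrite mxE sqrtC_ge0 density_spectral_ge0.
have p_sqr j : p 0 j = s 0 j ^+ 2 by rewrite mxE sqrtCK.
have selfK : (P *m HS *m P^t*)^t* = P *m HS *m P^t*.
  by rewrite !trmxC_mul trmxCK selfHS mulmxA.
set G := optimal_HA (P *m HS *m P^t*) s.
have selfG : G^t* = G := optimal_HA_selfadjoint selfK s_ge0.
pose M := P^t* *m diag_mx s.
have PM : P *m M = diag_mx s by rewrite /M mulmxA (unitarymxP UP) mul1mx.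
have MM : M *m M^t* = rho.
  rewrite /M trmxC_mul trmxCK !mulmxA -(mulmxA _ (diag_mx s)) (diag_mx_sqr s_ge0 p_sqr).
  by rewrite -spectral_decomp ?density_normalmx.
pose Phi := (mxvec M)^T; have PhiM : ket_mx Phi = M := ket_mxK M.
exists n, G^T, Phi; split; first exact: trmx_selfadjoint.
  split; last by rewrite ptraceA_proj PhiM MM.
  by rewrite /ket_normalized /dag dot_ket_mx PhiM MM; case: rho_density.
rewrite (variance_Htot _ selfHS (trmx_selfadjoint selfG)) trmxK PhiM.
rewrite -(ket_variance_unitary _ _ _ UP) PM.
by rewrite -(ket_variance_optimal selfK s_ge0 p_sqr) qfiE.
Qed.

End Purification.

Theorem theorem2 (C : numClosedFieldType) (n : nat) (HS rho : 'M[C]_n) :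
  hermitian_op HS -> density rho ->
  (forall (m : nat) (HA : 'M[C]_m) (Phi : 'cV[C]_(n * m)),
      hermitian_op HA -> purification rho Phi ->
      qfi HS rho <= qfi (Htot HS HA) (proj Phi) /\
      qfi HS rho <= 4 * variance (Htot HS HA) Phi) /\
  (exists (m : nat) (HA : 'M[C]_m) (Phi : 'cV[C]_(n * m)),
      [/\ hermitian_op HA, purification rho Phi,
          qfi HS rho = qfi (Htot HS HA) (proj Phi)
        & qfi HS rho = 4 * variance (Htot HS HA) Phi]).
Proof.
rewrite /hermitian_op => /hermsymmxP selfHS rho_density; split.
  move=> m HA Phi /hermsymmxP selfHA pur.
  have le := qfi_le_variance_purification selfHS selfHA rho_density pur.
  by rewrite qfi_pure ?Htot_selfadjoint //; case: pur.
have [m [HA [Phi [selfHA pur eqV]]]] := purification_attains_qfi selfHS rho_density.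
exists m, HA, Phi; split => //; first exact/hermsymmxP.
by rewrite qfi_pure ?Htot_selfadjoint //; case: pur.
Qed.
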